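(* Let $(V,\ell)$, $h_1$, and the sequence $(u_k)_{k\geq0}$ be as in the context, and suppose there is $\alpha>0$ with $\sum_{i=1}^\infty\frac{\|\ell_i\|}{i!}\leq\alpha$. Then for every $k\geq1$, $\frac{\|u_k\|}{k!}\leq\|u_1\|^k(\|h_1\|\alpha)^{k-1}C_k$, where $C_1=1$ and $C_k=\sum_{i=2}^k\sum_{r_1+\cdots+r_i=k}C_{r_1}\cdots C_{r_i}$ for $k\geq2$ (sum over tuples of positive integers).
   Context: $(V,\ell)$ is an $L_\infty$-algebra (graded symmetric degree-1 multilinear maps $\ell_k$, $\ell_0=0$, satisfying the $L_\infty$ Jacobi identities) with finite-dimensional components, $V_0=\mathbb{R}^n$, and $h_1:V_1\to V_0$, $h_2:V_2\to V_1$ are linear maps with $\ell_1\circ h_1+h_2\circ\ell_1=\mathrm{id}_{V_1}$. Norms are fixed on $V_0$ and $V_1$; $\|h_1\|$ is the operator norm and $\|\ell_i\|$ the operator norm of $\ell_i:V_0^{\times i}\to V_1$. Given $u_1\in\ker(\ell_1|_{V_0})$, set $u_0=0$ and $u_{k+1}=-h_1\big(\sum_{i=2}^{k+1}\sum_{r_1+\cdots+r_i=k+1,\,r_j\geq1}\frac{(k+1)!}{r_1!\cdots r_i!}\frac1{i!}\ell_i(u_{r_1},\ldots,u_{r_i})\big)$ for $k\geq1$. *)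

From HB Require Import structures.
From mathcomp Require Import all_boot all_order all_fingroup all_algebra.
From mathcomp Require Import all_classical all_reals all_analysis.
Set Implicit Arguments. Unset Strict Implicit. Unset Printing Implicit Defensive.
Import Order.TTheory GRing.Theory Num.Theory.
Local Open Scope ring_scope.
Local Open Scope classical_set_scope.

Section Linf.
Variables (R : realType) (V : lmodType R).

(* A Z-graded vector space is modelled by its total space V together with the
   family of homogeneous subspaces Vd d (d : int). *)
Definition is_subspace (P : V -> Prop) : Prop :=
  P 0 /\ forall (a : R) x y, P x -> P y -> P (a *: x + y).

Definition finite_dim (P : V -> Prop) : Prop :=
  exists b : seq V, (forall v, v \in b -> P v) /\
    forall x, P x -> exists a : nat -> R, x = \sum_(i < size b) a i *: b`_i.

Definition graded_fd (Vd : int -> V -> Prop) : Prop :=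
  [/\ forall d, is_subspace (Vd d),
      forall d, finite_dim (Vd d),
      forall v, exists (s : seq int) (c : int -> V),
          (forall d, Vd d (c d)) /\ v = \sum_(d <- s) c d
    &
      forall (s : seq int) (c : int -> V), uniq s -> (forall d, Vd d (c d)) ->
          \sum_(d <- s) c d = 0 -> forall d, d \in s -> c d = 0].

Definition is_Rn (P : V -> Prop) (n : nat) : Prop :=
  exists e : 'I_n -> V, [/\ forall j, P (e j),
    forall x, P x -> exists a : 'I_n -> R, x = \sum_j a j *: e j
  & forall a : 'I_n -> R, \sum_j a j *: e j = 0 -> forall j, a j = 0].

(* Koszul sign of the permutation s acting on homogeneous elements of
   degrees d: x_{s 0} (x) ... (x) x_{s (k-1)} = ksign s d * x_0 (x) ... *)
Definition ksign (k : nat) (s : 'S_k) (d : 'I_k -> int) : R :=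
  \prod_(a : 'I_k) \prod_(b : 'I_k | (a < b)%N && (s b < s a)%N)
     (-1) ^+ (odd `|d (s a)|%N && odd `|d (s b)|%N).

Definition unshuffle (k i : nat) (s : 'S_k) : bool :=
  [forall a : 'I_k, forall b : 'I_k,
     ((a < b)%N && ((b < i)%N || (i <= a)%N)) ==> (s a < s b)%N].

Definition upd (k : nat) (x : 'I_k -> V) (j : 'I_k) (y : V) : 'I_k -> V :=
  fun i => if i == j then y else x i.

(* L_infinity algebra (shifted convention: all brackets of degree 1,
   graded symmetric) on the graded space (V, Vd). *)
Definition is_Linfty (Vd : int -> V -> Prop) (l : forall k, ('I_k -> V) -> V)
  : Prop :=
  [/\
      forall k (x : 'I_k -> V) (j : 'I_k) (a : R) (y z : V),
        l k (upd x j (a *: y + z)) = a *: l k (upd x j y) + l k (upd x j z),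
      forall k (d : 'I_k -> int) (x : 'I_k -> V), (forall j, Vd (d j) (x j)) ->
        Vd ((\sum_j d j) + 1) (l k x),
      forall k (d : 'I_k -> int) (x : 'I_k -> V) (s : 'S_k),
        (forall j, Vd (d j) (x j)) ->
        l k (fun a => x (s a)) = ksign s d *: l k x,
      forall x : 'I_0 -> V, l 0 x = 0
    &
      forall n (d : 'I_n.+1 -> int) (x : 'I_n.+1 -> V),
        (forall j, Vd (d j) (x j)) ->
        let xs (s : 'S_n.+1) (m : nat) := x (s (inord m)) in
        \sum_(1 <= i < n.+2)
          \sum_(s : 'S_n.+1 | unshuffle i s)
            ksign s d *:
              l (n.+1 - i).+1 (fun a : 'I_(n.+1 - i).+1 =>
                 if (a == 0 :> nat) then l i (fun b : 'I_i => xs s b)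
                 else xs s (i + a - 1)%N) = 0].

(* compositions of m into i positive parts (entries bounded by m) *)
Definition compo (m i : nat) (r : {ffun 'I_i -> 'I_m.+1}) : bool :=
  [forall j, (0 < r j)%N] && ((\sum_j (r j : nat))%N == m).

(* the recursion defining u_{m} (m >= 2) from s = [:: u_0; ...; u_{m-1}] *)
Definition unext (l : forall k, ('I_k -> V) -> V) (h1 : V -> V)
    (s : seq V) (m : nat) : V :=
  - h1 (\sum_(2 <= i < m.+1) \sum_(r : {ffun 'I_i -> 'I_m.+1} | compo r)
        ((m`!)%:R / (\prod_j ((r j)`!))%:R / (i`!)%:R) *:
          l i (fun j => nth 0 s (r j))).

Fixpoint useq (l : forall k, ('I_k -> V) -> V) (h1 : V -> V) (u1 : V) (k : nat)
  : seq V :=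
  match k with
  | 0 => [:: 0]
  | 1 => [:: 0; u1]
  | k'.+1 => let s := useq l h1 u1 k' in rcons s (unext l h1 s k)
  end.

Definition useqn l h1 u1 (k : nat) : V := nth 0 (useq l h1 u1 k) k.

(* operator norm of l_i : V_0^i -> V_1 (extended real, +oo if unbounded) *)
Definition opnorm_l (Vd : int -> V -> Prop) (N0 N1 : V -> R)
  (l : forall k, ('I_k -> V) -> V) (i : nat) : \bar R :=
  ereal_sup [set (N1 (l i x))%:E |
     x in [set x : 'I_i -> V | forall j, Vd 0 (x j) /\ N0 (x j) <= 1]].

Definition opnorm_h (Vd : int -> V -> Prop) (N0 N1 : V -> R) (h1 : V -> V)
  : \bar R :=
  ereal_sup [set (N0 (h1 v))%:E | v in [set v | Vd 1 v /\ N1 v <= 1]].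

Definition is_norm_on (P : V -> Prop) (N : V -> R) : Prop :=
  [/\ forall x, P x -> N x = 0 -> x = 0,
      forall (a : R) x, P x -> N (a *: x) = `|a| * N x
    & forall x y, P x -> P y -> N (x + y) <= N x + N y].

End Linf.

Definition Cnext (s : seq nat) (m : nat) : nat :=
  \sum_(2 <= i < m.+1) \sum_(r : {ffun 'I_i -> 'I_m.+1} | compo r)
      \prod_j nth 0 s (r j).

Fixpoint Cseq (k : nat) : seq nat :=
  match k with
  | 0 => [:: 0]
  | 1 => [:: 0; 1]
  | k'.+1 => let s := Cseq k' in rcons s (Cnext s k)
  end.

Definition Cnum (k : nat) : nat := nth 0 (Cseq k) k.

From HB Require Import structures.
From mathcomp Require Import all_boot all_order all_fingroup all_algebra.
From mathcomp Require Import all_classical all_reals all_analysis.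
From mathcomp Require Import zify ring.
Import Order.TTheory GRing.Theory Num.Theory.
Local Open Scope ring_scope.
Set Implicit Arguments. Unset Strict Implicit. Unset Printing Implicit Defensive.

(* Summability of |l_i|/i! gives |l_i(x_1, ..., x_i)| <= i! alpha prod_j |x_j|, and the
   factorials of the induction hypotheses cancel the multinomial weight, so the
   composition r contributes |u_1|^k (|h_1| alpha)^(k-i+1) C_{r_1} ... C_{r_i}.  Since
   i >= 2 this is at most the term of C_k in the claimed bound once |h_1| alpha >= 1.
   That inequality holds unless every u_k with k >= 2 vanishes: if l_1 y <> 0 for some
   y in V_0, then w = l_1 y satisfies l_1 w = 0 (Jacobi), hence w = l_1 h_1 w by the
   homotopy and |w| <= alpha |h_1| |w|; if l_1 vanishes on V_0, the Jacobi identity of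
   arity k reduces on V_0 to l_1 l_k = 0, whence l_k = l_1 h_1 l_k + h_2 l_1 l_k = 0
   on V_0.  If |h_1| = +oo the bound is +oo unless u_1 = 0, and then all u_k vanish. *)

Section Multilinear.
Variables (R : realType) (V : lmodType R).

Definition multilinear (l : forall k, ('I_k -> V) -> V) : Prop :=
  forall k (x : 'I_k -> V) (j : 'I_k) (a : R) (y z : V),
    l k (upd x j (a *: y + z)) = a *: l k (upd x j y) + l k (upd x j z).

Variable l : forall k, ('I_k -> V) -> V.
Hypothesis l_ml : multilinear l.

Lemma upd_id k (x : 'I_k -> V) j : upd x j (x j) = x.
Proof. by apply: funext => i; rewrite /upd; case: eqP => // ->. Qed.

Lemma multilinear_upd0 k (x : 'I_k -> V) j : l (upd x j 0) = 0.
Proof.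
have := l_ml x j 1 0 0; rewrite !scale1r addr0 => l_upd0_twice.
by apply: (addrI (l (upd x j 0))); rewrite addr0 -l_upd0_twice.
Qed.

Lemma multilinear_eq0 k (x : 'I_k -> V) j : x j = 0 -> l x = 0.
Proof. by move=> xj0; rewrite -(upd_id x j) xj0 multilinear_upd0. Qed.

Lemma multilinear_updZ k (x : 'I_k -> V) j a y :
  l (upd x j (a *: y)) = a *: l (upd x j y).
Proof. by rewrite -[a *: y]addr0 l_ml multilinear_upd0 addr0. Qed.

Lemma multilinearZ k (c : 'I_k -> R) (x : 'I_k -> V) :
  l (fun j => c j *: x j) = (\prod_j c j) *: l x.
Proof.
pose xs (s : seq 'I_k) j := if j \in s then c j *: x j else x j.
suff xsE s : uniq s -> l (xs s) = (\prod_(j <- s) c j) *: l x.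
  rewrite -xsE ?index_enum_uniq //; congr (l _).
  by apply: funext => j; rewrite /xs mem_index_enum.
elim: s => [_|j0 s IHs /= /andP[j0s us]].
  by rewrite big_nil scale1r; congr (l _); apply: funext.
have -> : xs (j0 :: s) = upd (xs s) j0 (c j0 *: x j0).
  by apply: funext => j; rewrite /upd /xs in_cons; case: eqP => [->|].
have xs_j0 : xs s j0 = x j0 by rewrite /xs (negbTE j0s).
by rewrite multilinear_updZ -xs_j0 upd_id IHs // big_cons scalerA.
Qed.

End Multilinear.

Section Subspace.
Variables (R : realType) (V : lmodType R) (P : V -> Prop).
Hypothesis P_sub : is_subspace P.

Lemma subspace0 : P 0.
Proof. by case: P_sub. Qed.

Lemma subspaceD x y : P x -> P y -> P (x + y).
Proof. by case: P_sub => _ P_lin Px Py; rewrite -[x]scale1r; apply: P_lin. Qed.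

Lemma subspaceZ a x : P x -> P (a *: x).
Proof. by case: P_sub => P0 P_lin Px; rewrite -[_ *: _]addr0; apply: P_lin. Qed.

Lemma subspaceN x : P x -> P (- x).
Proof. by rewrite -scaleN1r; apply: subspaceZ. Qed.

Lemma subspace_sum (I : Type) (r : seq I) (Q : pred I) (F : I -> V) :
  (forall i, Q i -> P (F i)) -> P (\sum_(i <- r | Q i) F i).
Proof.
by move=> PF; elim/big_ind: _ => //; [exact: subspace0 | exact: subspaceD].
Qed.

End Subspace.

Section NormOn.
Variables (R : realType) (V : lmodType R) (P : V -> Prop) (N : V -> R).
Hypotheses (P_sub : is_subspace P) (N_norm : is_norm_on P N).

Lemma norm_on_eq0 x : P x -> N x = 0 -> x = 0.
Proof. by case: N_norm => N_eq0 _ _; apply: N_eq0. Qed.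

Lemma norm_onZ a x : P x -> N (a *: x) = `|a| * N x.
Proof. by case: N_norm => _ NZ _; apply: NZ. Qed.

Lemma norm_onD x y : P x -> P y -> N (x + y) <= N x + N y.
Proof. by case: N_norm => _ _ ND; apply: ND. Qed.

Lemma norm_on0 : N 0 = 0.
Proof. by rewrite -(scale0r 0) norm_onZ ?normr0 ?mul0r //; exact: subspace0. Qed.

Lemma norm_onN x : P x -> N (- x) = N x.
Proof. by move=> Px; rewrite -scaleN1r norm_onZ // normrN normr1 mul1r. Qed.

Lemma norm_on_ge0 x : P x -> 0 <= N x.
Proof.
move=> Px; have := norm_onD Px (subspaceN P_sub Px).
by rewrite subrr norm_on0 norm_onN // -mulr2n pmulrn_lge0.
Qed.

Lemma norm_on_gt0 x : P x -> x != 0 -> 0 < N x.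
Proof.
move=> Px /eqP x_neq0; rewrite lt_def norm_on_ge0 // andbT.
by apply/eqP => /(norm_on_eq0 Px).
Qed.

Lemma norm_on_sum (I : Type) (r : seq I) (Q : pred I) (F : I -> V) :
  (forall i, Q i -> P (F i)) ->
  N (\sum_(i <- r | Q i) F i) <= \sum_(i <- r | Q i) N (F i).
Proof.
move=> PF; elim: r => [|i r IHr]; first by rewrite !big_nil norm_on0.
rewrite !big_cons; case: ifP => // Qi.
apply: le_trans (norm_onD (PF _ Qi) _) _; last by rewrite lerD2l.
exact: subspace_sum.
Qed.

End NormOn.

Section RconsChain.
Variables (T : Type) (x0 : T) (f : nat -> seq T).
Hypotheses (f0 : size (f 0) = 1%N) (fS : forall k, exists y, f k.+1 = rcons (f k) y).

Lemma size_rcons_chain k : size (f k) = k.+1.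
Proof. by elim: k => // k IHk; have [y ->] := fS k; rewrite size_rcons IHk. Qed.

Lemma nth_rcons_chain k r : (r <= k)%N -> nth x0 (f k) r = nth x0 (f r) r.
Proof.
elim: k => [|k IHk]; first by rewrite leqn0 => /eqP ->.
rewrite leq_eqVlt => /orP[/eqP -> // | r_le_k].
by have [y ->] := fS k; rewrite nth_rcons size_rcons_chain r_le_k IHk.
Qed.

End RconsChain.

Section Compositions.
Variables (m i : nat) (r : {ffun 'I_i -> 'I_m.+1}).
Hypothesis r_compo : compo r.

Lemma compo_gt0 j : (0 < r j)%N.
Proof. by case/andP: r_compo => /forallP. Qed.

Lemma compo_sum : (\sum_j (r j : nat))%N = m.
Proof. by case/andP: r_compo => _ /eqP. Qed.

Lemma compo_size_le : (i <= m)%N.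
Proof.
rewrite -compo_sum -[X in (X <= _)%N]card_ord -sum1_card.
by apply: leq_sum => j _; apply: compo_gt0.
Qed.

Lemma compo_sum_pred : (\sum_j (r j).-1)%N = (m - i)%N.
Proof.
apply/eqP; rewrite -(eqn_add2r i) -[X in (_ + X)%N]card_ord -sum1_card -big_split /=.
rewrite (eq_bigr (fun j => r j : nat)) => [|j _]; last by rewrite addn1 prednK ?compo_gt0.
by rewrite compo_sum subnK // compo_size_le.
Qed.

Lemma compo_lt j : (1 < i)%N -> (r j < m)%N.
Proof.
move=> i_gt1; have [j' j'_neq_j] : exists j' : 'I_i, j' != j.
  have /card_gt0P[j' /[!inE] j'_neq_j] : (0 < #|predC1 j|)%N.
    by rewrite cardC1 card_ord -ltnS prednK // ltnW.
  by exists j'.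
rewrite -[X in (_ < X)%N]compo_sum (bigD1 j) //= -[X in (X < _)%N]addn0 ltn_add2l.
by rewrite (bigD1 j') //= addn_gt0 compo_gt0.
Qed.

Lemma prod_compo (S : comPzRingType) (a b : S) (F : nat -> S) :
  \prod_j (a ^+ r j * b ^+ (r j).-1 * F (r j))
    = a ^+ m * b ^+ (m - i) * \prod_j F (r j).
Proof. by rewrite !big_split /= !prodrXr compo_sum compo_sum_pred. Qed.

End Compositions.

Lemma compo1 m : compo [ffun _ : 'I_m => inord 1 : 'I_m.+1].
Proof.
case: m => [|m]; first by rewrite /compo big_ord0 andbT; apply/forallP => -[].
apply/andP; split; first by apply/forallP => j; rewrite ffunE inordK.
rewrite (eq_bigr (fun _ => 1%N)) => [|j _]; last by rewrite ffunE inordK.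
by rewrite sum1_card card_ord.
Qed.

Lemma CnumE k : (1 < k)%N ->
  Cnum k = (\sum_(2 <= i < k.+1) \sum_(r : {ffun 'I_i -> 'I_k.+1} | compo r)
              \prod_j Cnum (r j))%N.
Proof.
have Cseq_chain : forall k, exists y, Cseq k.+1 = rcons (Cseq k) y by case; eexists.
case: k => [|[|k]] // _; rewrite /Cnum.
have -> : Cseq k.+2 = rcons (Cseq k.+1) (Cnext (Cseq k.+1) k.+2) by [].
rewrite nth_rcons (size_rcons_chain _ Cseq_chain) // ltnn eqxx /Cnext.
apply: eq_big_nat => i /andP[i_gt1 _]; apply: eq_bigr => r r_compo.
apply: eq_bigr => j _; apply: (nth_rcons_chain _ _ Cseq_chain) => //.
exact: (compo_lt r_compo j i_gt1).
Qed.

Lemma Cnum_gt0 k : (0 < k)%N -> (0 < Cnum k)%N.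
Proof.
case: k => [|[|k]] // _; rewrite CnumE // big_nat_recr //= addn_gt0 orbC.
rewrite (bigD1 _ (compo1 _)) //= addn_gt0 prodn_gt0 // => j.
by rewrite ffunE inordK.
Qed.

Section LinftyOnV0.
Variables (R : realType) (V : lmodType R) (Vd : int -> V -> Prop).
Variable l : forall k, ('I_k -> V) -> V.
Hypothesis l_ml : multilinear l.
Hypothesis l_deg : forall k (d : 'I_k -> int) (x : 'I_k -> V),
  (forall j, Vd (d j) (x j)) -> Vd ((\sum_j d j) + 1) (l x).
Hypothesis l_sym : forall k (d : 'I_k -> int) (x : 'I_k -> V) (s : 'S_k),
  (forall j, Vd (d j) (x j)) -> l (fun a => x (s a)) = ksign R s d *: l x.
Hypothesis l_jac : forall n (d : 'I_n.+1 -> int) (x : 'I_n.+1 -> V),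
  (forall j, Vd (d j) (x j)) ->
  let xs (s : 'S_n.+1) (m : nat) := x (s (inord m)) in
  \sum_(1 <= i < n.+2) \sum_(s : 'S_n.+1 | unshuffle i s)
    ksign R s d *: l (fun a : 'I_(n.+1 - i).+1 =>
      if (a == 0 :> nat) then l (fun b : 'I_i => xs s b) else xs s (i + a - 1)%N) = 0.

Definition bracket_vanishes (i : nat) : Prop :=
  forall x : 'I_i -> V, (forall j, Vd 0 (x j)) -> l x = 0.

Lemma bracket_V1 k (x : 'I_k -> V) : (forall j, Vd 0 (x j)) -> Vd 1 (l x).
Proof. by move=> x_V0; have := l_deg x_V0; rewrite big1 ?add0r. Qed.

Lemma ksign_deg0 k (s : 'S_k) : ksign R s (fun _ => 0) = 1.
Proof. by rewrite /ksign big1 // => a _; rewrite big1 // => b _; rewrite expr0. Qed.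

Lemma unshuffle_perm1 k i : unshuffle i (1 : 'S_k).
Proof. by apply/forallP => a; apply/forallP => b; apply/implyP => /andP[]; rewrite !perm1. Qed.

Lemma l1_bracket_eq0 n (x : 'I_n.+1 -> V) : (forall j, Vd 0 (x j)) ->
  (forall i, (0 < i <= n)%N -> bracket_vanishes i) -> l (fun _ : 'I_1 => l x) = 0.
Proof.
move=> x_V0 l_vanish; have := l_jac x_V0; cbv zeta.
(* Only i = n+1 survives: l_1 (l_{n+1} x) once per unshuffle, and 1 is one. *)
rewrite big_nat_recr //= big_nat_cond big1.
  rewrite add0r subnn (eq_bigr (fun _ => l (fun _ : 'I_1 => l x))) => [|s _].
    rewrite sumr_const => /eqP; rewrite -scaler_nat scaler_eq0 pnatr_eq0.
    case/orP => [/eqP/card0_eq/(_ 1%g)|/eqP //].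
    by rewrite !inE => /negbT/negP[]; apply: unshuffle_perm1.
  rewrite ksign_deg0 scale1r; congr (l _); apply: funext => a; rewrite ord1 /=.
  under eq_fun do rewrite inord_val.
  by rewrite (l_sym (d := fun _ => 0)) // ksign_deg0 scale1r.
move=> i /andP[/andP[i_gt0 i_le_n] _]; apply: big1 => s _.
rewrite (multilinear_eq0 l_ml (j := ord0)) ?scaler0 //=.
by apply: l_vanish; rewrite ?i_gt0.
Qed.

Variables (h1 h2 : {linear V -> V}).
Hypothesis h1_V0 : forall v, Vd 1 v -> Vd 0 (h1 v).
Hypothesis homotopy : forall v, Vd 1 v ->
  l (fun _ : 'I_1 => h1 v) + h2 (l (fun _ : 'I_1 => v)) = v.

Lemma bracket_vanishes_of_l1 : bracket_vanishes 1 ->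
  forall k, (0 < k)%N -> bracket_vanishes k.
Proof.
move=> l1_vanish; elim/ltn_ind => -[|n] // IHn _ x x_V0.
have l_x_V1 := bracket_V1 x_V0.
rewrite -(homotopy l_x_V1) l1_vanish ?add0r => [|_]; last exact: h1_V0.
rewrite (l1_bracket_eq0 x_V0) ?linear0 // => i /andP[i_gt0 i_le_n].
exact: IHn.
Qed.

Lemma l1_h1_l1 (x : 'I_1 -> V) : (forall j, Vd 0 (x j)) ->
  l (fun _ : 'I_1 => h1 (l x)) = l x.
Proof.
move=> x_V0; rewrite -[RHS](homotopy (bracket_V1 x_V0)) l1_bracket_eq0 ?linear0 ?addr0 //.
by move=> [|i] /andP[].
Qed.

End LinftyOnV0.

Definition multinomial_weight {F : fieldType} k i (r : {ffun 'I_i -> 'I_k.+1}) : F :=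
  (k`!)%:R / (\prod_j (r j)`!)%:R / (i`!)%:R.

Section Sequence.
Variables (R : realType) (V : lmodType R) (Vd : int -> V -> Prop).
Variables (l : forall k, ('I_k -> V) -> V) (h1 : {linear V -> V}) (u1 : V).

Local Notation u := (useqn l h1 u1).

Definition bracket_sum k : V :=
  \sum_(2 <= i < k.+1) \sum_(r : {ffun 'I_i -> 'I_k.+1} | compo r)
    multinomial_weight r *: l (fun j => u (r j)).

Lemma useqnE k : (1 < k)%N -> u k = - h1 (bracket_sum k).
Proof.
have useq_chain k' : exists y, useq l h1 u1 k'.+1 = rcons (useq l h1 u1 k') y.
  by case: k'; eexists.
case: k => [|[|k]] // _; rewrite /useqn.
have -> : useq l h1 u1 k.+2 =
    rcons (useq l h1 u1 k.+1) (unext l h1 (useq l h1 u1 k.+1) k.+2) by [].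
rewrite nth_rcons (size_rcons_chain _ useq_chain) // ltnn eqxx /unext /bracket_sum.
congr (- h1 _); apply: eq_big_nat => i /andP[i_gt1 _].
apply: eq_bigr => r r_compo.
congr (_ *: l _); apply: funext => j; apply: (nth_rcons_chain _ _ useq_chain) => //.
exact: (compo_lt r_compo j i_gt1).
Qed.

Hypotheses (V0_sub : is_subspace (Vd 0)) (V1_sub : is_subspace (Vd 1)).
Hypothesis l_deg : forall k (d : 'I_k -> int) (x : 'I_k -> V),
  (forall j, Vd (d j) (x j)) -> Vd ((\sum_j d j) + 1) (l x).
Hypotheses (h1_V0 : forall v, Vd 1 v -> Vd 0 (h1 v)) (u1_V0 : Vd 0 u1).

Lemma bracket_sum_V1 k : (forall r, (r < k)%N -> Vd 0 (u r)) -> Vd 1 (bracket_sum k).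
Proof.
move=> u_V0; rewrite /bracket_sum big_nat_cond.
apply: subspace_sum => // i /andP[/andP[i_gt1 _] _]; apply: subspace_sum => // r r_compo.
apply: subspaceZ => //; apply: (bracket_V1 l_deg) => j.
exact/u_V0/(compo_lt r_compo).
Qed.

Lemma useqn_V0 k : Vd 0 (u k).
Proof.
elim/ltn_ind: k => -[|[|k]] IHk; [exact: subspace0 | exact: u1_V0 |].
by rewrite useqnE //; apply/(subspaceN V0_sub)/h1_V0/bracket_sum_V1.
Qed.

Lemma useqn_eq0_of_vanish : (forall i, (1 < i)%N -> bracket_vanishes Vd l i) ->
  forall k, (1 < k)%N -> u k = 0.
Proof.
move=> l_vanish k k_gt1; rewrite useqnE // /bracket_sum big_nat_cond big1 ?linear0 ?oppr0 //.
move=> i /andP[/andP[i_gt1 _] _]; apply: big1 => r _.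
by rewrite l_vanish ?scaler0 // => j; apply: useqn_V0.
Qed.

Hypothesis l_ml : multilinear l.

Lemma useqn_eq0_of_u1 : u1 = 0 -> forall k, u k = 0.
Proof.
move=> u1_eq0; elim/ltn_ind => -[|[|k]] // IHk.
rewrite useqnE // /bracket_sum big_nat_cond big1 ?linear0 ?oppr0 //.
move=> i /andP[/andP[i_gt1 _] _]; apply: big1 => r r_compo.
by rewrite (multilinear_eq0 l_ml (j := Ordinal (ltnW i_gt1))) ?scaler0 // IHk ?compo_lt.
Qed.

End Sequence.

Section OperatorNorms.
Local Open Scope classical_set_scope.
Variables (R : realType) (V : lmodType R) (Vd : int -> V -> Prop).
Variables (l : forall k, ('I_k -> V) -> V) (h1 : {linear V -> V}) (N0 N1 : V -> R).
Hypotheses (V0_sub : is_subspace (Vd 0)) (V1_sub : is_subspace (Vd 1)).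
Hypotheses (N0_norm : is_norm_on (Vd 0) N0) (N1_norm : is_norm_on (Vd 1) N1).
Hypothesis l_ml : multilinear l.
Hypothesis l_deg : forall k (d : 'I_k -> int) (x : 'I_k -> V),
  (forall j, Vd (d j) (x j)) -> Vd ((\sum_j d j) + 1) (l x).
Hypothesis h1_V0 : forall v, Vd 1 v -> Vd 0 (h1 v).

Lemma opnorm_l_ge0 i : (0 < i)%N -> (0 <= opnorm_l Vd N0 N1 l i)%E.
Proof.
move=> i_gt0; apply: (@le_trans _ _ (N1 (l (fun _ : 'I_i => 0)))%:E).
  by rewrite (multilinear_eq0 l_ml (j := Ordinal i_gt0)) // (norm_on0 V1_sub N1_norm).
apply: ereal_sup_ubound; exists (fun _ => 0) => // j.
by rewrite (norm_on0 V0_sub N0_norm); split; [exact: subspace0|].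
Qed.

Lemma opnorm_l_term_le alpha i :
  (\sum_(1 <= i <oo) (opnorm_l Vd N0 N1 l i * ((i`!)%:R^-1)%:E) <= alpha%:E)%E ->
  (0 < i)%N -> (opnorm_l Vd N0 N1 l i * ((i`!)%:R^-1)%:E <= alpha%:E)%E.
Proof.
move=> series_le i_gt0; apply: le_trans series_le.
have term_ge0 n : (1 <= n)%N -> true -> (0 <= opnorm_l Vd N0 N1 l n * ((n`!)%:R^-1)%:E)%E.
  by move=> n_gt0 _; rewrite mule_ge0 ?opnorm_l_ge0 // lee_fin invr_ge0.
apply: le_trans (nneseries_lim_ge i.+1 term_ge0).
rewrite big_nat_recr //= lee_paddl // big_nat_cond sume_ge0 // => n /andP[/andP[n_gt0 _] _].
exact: term_ge0.
Qed.

Lemma norm_bracket_le alpha i (x : 'I_i -> V) :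
  (\sum_(1 <= i <oo) (opnorm_l Vd N0 N1 l i * ((i`!)%:R^-1)%:E) <= alpha%:E)%E ->
  0 <= alpha -> (0 < i)%N -> (forall j, Vd 0 (x j)) ->
  N1 (l x) <= (i`!)%:R * alpha * \prod_j N0 (x j).
Proof.
move=> series_le alpha_ge0 i_gt0 x_V0.
have fact_gt0 : 0 < (i`!)%:R :> R by rewrite ltr0n fact_gt0.
have unit_le (y : 'I_i -> V) :
    (forall j, Vd 0 (y j) /\ N0 (y j) <= 1) -> N1 (l y) <= (i`!)%:R * alpha.
  move=> y_ball; rewrite -ler_pdivrMl // mulrC -lee_fin EFinM.
  apply: le_trans (opnorm_l_term_le series_le i_gt0).
  rewrite lee_wpmul2r ?lee_fin ?invr_ge0 ?ler0n //.
  by apply: ereal_sup_ubound; exists y.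
have [j /eqP xj0 | x_neq0] := pickP (fun j => x j == 0).
  rewrite (multilinear_eq0 l_ml xj0) (norm_on0 V1_sub N1_norm).
  by rewrite !mulr_ge0 ?ler0n ?prodr_ge0 // => j' _; apply: (norm_on_ge0 V0_sub N0_norm).
have N0x_gt0 j : 0 < N0 (x j) by rewrite (norm_on_gt0 V0_sub) ?x_neq0.
have := unit_le (fun j => (N0 (x j))^-1 *: x j).
rewrite (multilinearZ l_ml (fun j => (N0 (x j))^-1) x).
rewrite (norm_onZ N1_norm) ?prodfV; last exact: (bracket_V1 l_deg x_V0).
rewrite ger0_norm ?invr_ge0 ?prodr_ge0 // => [|j _]; last exact: ltW.
rewrite -ler_pdivlMl ?invr_gt0 ?prodr_gt0 // invrK mulrC; apply => j.
split; first exact: subspaceZ.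
by rewrite (norm_onZ N0_norm) // ger0_norm ?invr_ge0 ?(ltW (N0x_gt0 j)) // mulVf ?gt_eqF.
Qed.

Lemma opnorm_h_ge0 : (0 <= opnorm_h Vd N0 N1 h1)%E.
Proof.
apply: (@le_trans _ _ (N0 (h1 0))%:E).
  by rewrite linear0 (norm_on0 V0_sub N0_norm).
apply: ereal_sup_ubound; exists 0 => //=.
by rewrite (norm_on0 V1_sub N1_norm); split; [exact: subspace0|].
Qed.

Lemma norm_h1_le h v : opnorm_h Vd N0 N1 h1 = h%:E -> Vd 1 v -> N0 (h1 v) <= h * N1 v.
Proof.
move=> opnorm_hE v_V1; have [->|v_neq0] := eqVneq v 0.
  by rewrite linear0 (norm_on0 V1_sub N1_norm) (norm_on0 V0_sub N0_norm) mulr0.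
have N1v_gt0 := norm_on_gt0 V1_sub N1_norm v_V1 v_neq0.
have : ((N0 (h1 ((N1 v)^-1 *: v)))%:E <= h%:E)%E.
  rewrite -opnorm_hE; apply: ereal_sup_ubound; exists ((N1 v)^-1 *: v) => //.
  split; first exact: subspaceZ.
  by rewrite (norm_onZ N1_norm) // ger0_norm ?invr_ge0 ?(ltW N1v_gt0) // mulVf ?gt_eqF.
rewrite lee_fin linearZ /= (norm_onZ N0_norm); last exact: h1_V0.
rewrite ger0_norm ?invr_ge0 ?(ltW N1v_gt0) //.
by rewrite -ler_pdivlMl ?invr_gt0 // invrK mulrC.
Qed.

End OperatorNorms.

Section Estimate.
Variables (R : realType) (V : lmodType R) (Vd : int -> V -> Prop).
Variables (l : forall k, ('I_k -> V) -> V) (h1 : {linear V -> V}) (N0 N1 : V -> R).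
Variables (u1 : V) (alpha h : R).
Hypotheses (V0_sub : is_subspace (Vd 0)) (V1_sub : is_subspace (Vd 1)).
Hypotheses (N0_norm : is_norm_on (Vd 0) N0) (N1_norm : is_norm_on (Vd 1) N1).
Hypothesis l_deg : forall k (d : 'I_k -> int) (x : 'I_k -> V),
  (forall j, Vd (d j) (x j)) -> Vd ((\sum_j d j) + 1) (l x).
Hypotheses (h1_V0 : forall v, Vd 1 v -> Vd 0 (h1 v)) (u1_V0 : Vd 0 u1).
Hypothesis bracket_le : forall i (x : 'I_i -> V), (0 < i)%N -> (forall j, Vd 0 (x j)) ->
  N1 (l x) <= (i`!)%:R * alpha * \prod_j N0 (x j).
Hypothesis h1_le : forall v, Vd 1 v -> N0 (h1 v) <= h * N1 v.
Hypotheses (alpha_ge0 : 0 <= alpha) (h_ge0 : 0 <= h).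

Lemma ge1_of_l1_h1_fixed w : Vd 1 w -> w != 0 ->
  l (fun _ : 'I_1 => h1 w) = w -> 1 <= h * alpha.
Proof.
move=> w_V1 w_neq0 l1_h1_w; have N1w_gt0 := norm_on_gt0 V1_sub N1_norm w_V1 w_neq0.
rewrite -(ler_pM2r N1w_gt0) mul1r.
have := bracket_le (x := fun _ : 'I_1 => h1 w) (ltnSn 0) (fun _ => h1_V0 w_V1).
rewrite l1_h1_w big_ord1 [1`!]/= mul1r => /le_trans; apply.
by rewrite [h * alpha]mulrC -mulrA ler_wpM2l ?h1_le.
Qed.

Hypothesis halpha_ge1 : 1 <= h * alpha.

Local Notation u := (useqn l h1 u1).

Lemma norm_bracket_term_le k i (r : {ffun 'I_i -> 'I_k.+1}) : (1 < i)%N -> compo r ->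
  (forall j, N0 (u (r j)) <=
     ((r j)`!)%:R * (N0 u1 ^+ r j * (h * alpha) ^+ (r j).-1 * (Cnum (r j))%:R)) ->
  h * N1 (multinomial_weight r *: l (fun j => u (r j)))
    <= (k`!)%:R * (N0 u1 ^+ k * (h * alpha) ^+ k.-1 * \prod_j (Cnum (r j))%:R).
Proof.
move=> i_gt1 r_compo IH; set b := h * alpha; set C := \prod_j _.
pose c n := (Cnum n)%:R : R.
have u_V0 j : Vd 0 (u (r j)) by apply: useqn_V0.
have fact_neq0 n : (n`!)%:R != 0 :> R by rewrite pnatr_eq0 -lt0n fact_gt0.
have prod_le : \prod_j N0 (u (r j))
    <= (\prod_j (r j)`!)%:R * (N0 u1 ^+ k * b ^+ (k - i) * C).
  rewrite natr_prod -(prod_compo r_compo _ _ c) -big_split /=; apply: ler_prod => j _.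
  by rewrite (norm_on_ge0 V0_sub N0_norm) ?IH.
rewrite (norm_onZ N1_norm); last exact: (bracket_V1 l_deg u_V0).
have weight_ge0 : 0 <= multinomial_weight r :> R by rewrite !divr_ge0.
have bracket_le' := le_trans (bracket_le (ltnW i_gt1) u_V0)
  (ler_wpM2l (mulr_ge0 (ler0n _ _) alpha_ge0) prod_le).
rewrite ger0_norm //; apply: le_trans (ler_wpM2l h_ge0 (ler_wpM2l weight_ge0 bracket_le')) _.
have -> : h * (multinomial_weight r * ((i`!)%:R * alpha *
      ((\prod_j (r j)`!)%:R * (N0 u1 ^+ k * b ^+ (k - i) * C))))
    = (k`!)%:R * (N0 u1 ^+ k * b ^+ (k - i).+1 * C).
  rewrite /multinomial_weight /b exprS; field.
  by rewrite fact_neq0 pnatr_eq0 -lt0n; apply: prodn_gt0 => j; exact: fact_gt0.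
have i_le_k := compo_size_le r_compo.
have N0u1_ge0 := norm_on_ge0 V0_sub N0_norm u1_V0.
by rewrite ler_wpM2l // ler_wpM2r ?prodr_ge0 // ler_wpM2l ?exprn_ge0 // ler_weXn2l //; lia.
Qed.

Lemma norm_useqn_le k : (0 < k)%N ->
  N0 (u k) <= (k`!)%:R * (N0 u1 ^+ k * (h * alpha) ^+ k.-1 * (Cnum k)%:R).
Proof.
elim/ltn_ind: k => -[|[|k]] // IHk _; first by rewrite /= expr1 !mulr1 mul1r.
have u_V0 r : (r < k.+2)%N -> Vd 0 (u r) by move=> _; apply: useqn_V0.
have sum_V1 := bracket_sum_V1 V1_sub l_deg u_V0.
rewrite useqnE // (norm_onN N0_norm); last exact: h1_V0.
apply: le_trans (h1_le sum_V1) _.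
have -> : (Cnum k.+2)%:R = \sum_(2 <= i < k.+3) \sum_(r : {ffun 'I_i -> 'I_k.+3} | compo r)
    \prod_j (Cnum (r j))%:R :> R.
  rewrite CnumE // natr_sum; apply: eq_bigr => i _.
  by rewrite natr_sum; apply: eq_bigr => r _; rewrite natr_prod.
have term_V1 i (r : {ffun 'I_i -> 'I_k.+3}) :
    Vd 1 (multinomial_weight r *: l (fun j => u (r j))).
  by apply: (subspaceZ V1_sub); apply: (bracket_V1 l_deg) => j; apply: useqn_V0.
rewrite /bracket_sum !mulr_sumr.
apply: le_trans (ler_wpM2l h_ge0 _) _.
  by apply: (norm_on_sum V1_sub N1_norm) => i _; apply: (subspace_sum V1_sub) => r _.
rewrite mulr_sumr; apply: ler_sum_nat => i /andP[i_gt1 _].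
rewrite !mulr_sumr; apply: le_trans (ler_wpM2l h_ge0 _) _.
  by apply: (norm_on_sum V1_sub N1_norm) => r _.
rewrite mulr_sumr; apply: ler_sum => r r_compo; apply: norm_bracket_term_le => // j.
by apply: IHk; [exact: compo_lt | exact: compo_gt0].
Qed.

End Estimate.

Section EstimateRHS.
Variable R : realType.
Local Open Scope ereal_scope.

Lemma expe_pinfty n : (+oo : \bar R) ^+ n.+1 = +oo.
Proof. by elim: n => // n IHn; rewrite expeS IHn mulyy. Qed.

Lemma estimate_rhs_ge0 (a alpha : R) (H : \bar R) k c : (0 <= a)%R -> 0 <= H ->
  (0 <= alpha)%R -> 0 <= (a ^+ k)%:E * (H * alpha%:E) ^+ (k - 1) * (c%:R)%:E.
Proof.
move=> a_ge0 H_ge0 alpha_ge0.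
by rewrite !mule_ge0 ?expe_ge0 ?mule_ge0 ?lee_fin ?exprn_ge0 ?ler0n.
Qed.

Lemma estimate_rhs_pinfty (a alpha : R) k c : (0 < a)%R -> (0 < alpha)%R ->
  (0 < c)%N -> (1 < k)%N -> (a ^+ k)%:E * (+oo * alpha%:E) ^+ (k - 1) * (c%:R)%:E = +oo.
Proof.
move=> a_gt0 alpha_gt0 c_gt0; case: k => [|[|k]] // _.
rewrite gt0_mulye ?lte_fin // subn1 expe_pinfty.
by rewrite gt0_muley ?gt0_mulye ?lte_fin ?exprn_gt0 ?ltr0n.
Qed.

Lemma lee_estimate_fin (x a alpha h : R) k c :
  (x <= (k`!)%:R * (a ^+ k * (h * alpha) ^+ k.-1 * c%:R))%R ->
  (x / (k`!)%:R)%:E <= (a ^+ k)%:E * (h%:E * alpha%:E) ^+ (k - 1) * (c%:R)%:E.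
Proof.
move=> x_le; rewrite -EFinM -EFin_expe -!EFinM lee_fin subn1.
by rewrite ler_pdivrMr ?ltr0n ?fact_gt0 // mulrC.
Qed.

End EstimateRHS.

Theorem lemma5p14 (R : realType) (V : lmodType R) (Vd : int -> V -> Prop)
    (l : forall k, ('I_k -> V) -> V) (n : nat)
    (h1 h2 : {linear V -> V}) (N0 N1 : V -> R) (u1 : V) (alpha : R) :
  graded_fd Vd ->
  is_Linfty Vd l ->
  is_Rn (Vd 0) n ->
  (forall v, Vd 1 v -> Vd 0 (h1 v)) ->
  (forall v, Vd 2 v -> Vd 1 (h2 v)) ->
  (forall v, Vd 1 v -> l 1 (fun _ => h1 v) + h2 (l 1 (fun _ => v)) = v) ->
  is_norm_on (Vd 0) N0 ->
  is_norm_on (Vd 1) N1 ->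
  Vd 0 u1 -> l 1 (fun _ => u1) = 0 ->
  0 < alpha ->
  (\sum_(1 <= i <oo) (opnorm_l Vd N0 N1 l i * ((i`!)%:R^-1)%:E)
     <= alpha%:E)%E ->
  forall k : nat, (1 <= k)%N ->
    ((N0 (useqn l h1 u1 k) / (k`!)%:R)%:E
      <= (N0 u1 ^+ k)%:E * (opnorm_h Vd N0 N1 h1 * alpha%:E) ^+ (k - 1)
         * ((Cnum k)%:R)%:E)%E.
Proof.
move=> [V_sub _ _ _] [l_ml l_deg l_sym _ l_jac] _ h1_V0 _ homotopy N0_norm N1_norm u1_V0 _
  alpha_gt0 series_le k k_gt0.
have [V0_sub V1_sub] := (V_sub 0, V_sub 1); have alpha_ge0 := ltW alpha_gt0.
have H_ge0 := opnorm_h_ge0 h1 V0_sub V1_sub N0_norm N1_norm.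
have rhs_ge0 := estimate_rhs_ge0 k (Cnum k) (norm_on_ge0 V0_sub N0_norm u1_V0) H_ge0 alpha_ge0.
case: k k_gt0 rhs_ge0 => [|[|k]] // _ rhs_ge0.
  by rewrite subnn expe0 mule1 expr1 /useqn /= divr1 mule1.
have [uk0|uk_neq0] := eqVneq (useqn l h1 u1 k.+2) 0.
  by rewrite uk0 (norm_on0 V0_sub N0_norm) mul0r.
have u1_neq0 : u1 != 0.
  by apply: contra_neq uk_neq0 => u1_eq0; rewrite (useqn_eq0_of_u1 h1 l_ml u1_eq0).
have [l1_vanish|/existsNP[x /not_implyP[x_V0 /eqP lx_neq0]]] :=
  pselect (bracket_vanishes Vd l 1).
  case/eqP: uk_neq0; apply: useqn_eq0_of_vanish => // i /ltnW i_gt0.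
  exact: (bracket_vanishes_of_l1 l_ml l_deg l_sym l_jac h1_V0 homotopy).
have bracket_le :=
  norm_bracket_le V0_sub V1_sub N0_norm N1_norm l_ml l_deg series_le alpha_ge0.
case opnorm_hE : (opnorm_h Vd N0 N1 h1) H_ge0 => [h| |] // h_ge0.
  have h1_le := norm_h1_le V0_sub V1_sub N0_norm N1_norm h1_V0 opnorm_hE.
  have halpha_ge1 : 1 <= h * alpha.
    apply: (ge1_of_l1_h1_fixed V1_sub N1_norm h1_V0 bracket_le h1_le alpha_ge0
      (bracket_V1 l_deg x_V0) lx_neq0).
    exact: (l1_h1_l1 l_ml l_deg l_sym l_jac homotopy x_V0).
  by apply/lee_estimate_fin/(norm_useqn_le V0_sub V1_sub N0_norm N1_norm l_deg h1_V0 u1_V0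
    bracket_le h1_le alpha_ge0 h_ge0 halpha_ge1).
by rewrite (@estimate_rhs_pinfty _ (N0 u1) alpha k.+2 (Cnum k.+2)) ?leey
  ?(norm_on_gt0 V0_sub N0_norm) ?Cnum_gt0.
Qed.
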